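(* In the production planning setting described in the context, fix $\pmb{x}\in\mathbb{X}$, assume $\Gamma^c\in\mathbb{Z}_+$ and $\Delta_t\in\mathbb{Z}_+$ for all $t\in[T]$, and let $G$ with arc costs be as defined in the context. Then for every real $C^*$: a solution with cost $C^*$ is optimal for the problem $$\max\ \sum_{t\in[T]}\max\{f_I(X_t,\widehat{D}_t-\delta_t),f_B(X_t,\widehat{D}_t+\delta_t)\}\ \text{ s.t. }\ \sum_{t\in[T]}\delta_t\le\Gamma^c,\ 0\le\delta_t\le\Delta_t\ (t\in[T])$$ if and only if there is a longest $\mathfrak{s}$-$\mathfrak{t}$ path in $G$ with length $C^*$.
   Context: There are $T\ge 1$ periods, $[T]=\{1,\dots,T\}$. Given are costs $c^P,c^I,c^B$, a selling price $b^P$, and a set $\mathbb{X}\subseteq\mathbb{R}^T_+$ of feasible production plans described by finitely many linear constraints; for a plan $X_t=\sum_{i\in[t]}x_i$. For $t\in[T-1]$ let $f_I(X_t,D_t)=c^I(X_t-D_t)$, $f_B(X_t,D_t)=c^B(D_t-X_t)$; for $t=T$ let $f_I(X_T,D_T)=c^I(X_T-D_T)+c^PX_T-b^PD_T$, $f_B(X_T,D_T)=c^B(D_T-X_T)+c^PX_T-b^PX_T$. Nominal cumulative demands $\widehat{D}_t\ge0$ are nondecreasing, deviations $0\le\Delta_t\le\widehat{D}_t$, budget $\Gamma^c$. The directed layered graph $G$ has layers $V_0=\{\mathfrak{s}\}$ with $\mathfrak{s}=0^0$, $V_t=\{t^0,t^1,\dots,t^{\Gamma^c}\}$ for $t\in[T]$,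 and $V_{T+1}=\{\mathfrak{t}\}$. For $t\in[T]$, each node $(t-1)^{\delta}\in V_{t-1}$ and each integer $\delta_t\in\{0,\dots,\Delta_t\}$ with $\delta+\delta_t\le\Gamma^c$, there is an arc $((t-1)^{\delta},t^{\delta+\delta_t})$ with cost $\max\{f_I(X_t,\widehat{D}_t-\delta_t),f_B(X_t,\widehat{D}_t+\delta_t)\}$; every node of $V_T$ is joined to $\mathfrak{t}$ by an arc of cost $0$. The length of a path is the sum of its arc costs. *)

From Stdlib Require Import List.
From mathcomp Require Import all_boot all_order all_algebra.
Set Implicit Arguments. Unset Strict Implicit. Unset Printing Implicit Defensive.
Import Order.TTheory GRing.Theory Num.Theory.
Local Open Scope ring_scope.

Section Model.
Variable R : realFieldType.
Variable T : nat.                       (* number of periods, periods are 1..T *)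
Variables cP cI cB bP : R.
Variable x : nat -> R.
Variable Dh : nat -> R.                 (* nominal cumulative demands *)
Variable Delta : nat -> nat.
Variable Gamma : nat.

(* feasible set of plans: x >= 0 and finitely many linear constraints
   sum_{i in [T]} a_i x_i <= beta, given as a list of pairs (a, beta) *)
Definition in_Xset (cstr : seq ((nat -> R) * R)) (y : nat -> R) : Prop :=
  (forall i, (1 <= i <= T)%N -> 0 <= y i) /\
  (forall c, In c cstr -> \sum_(1 <= i < T.+1) c.1 i * y i <= c.2).

Definition Xc (t : nat) : R := \sum_(1 <= i < t.+1) x i.

Definition fI (t : nat) (X D : R) : R :=
  if (t < T)%N then cI * (X - D) else cI * (X - D) + cP * X - bP * D.
Definition fB (t : nat) (X D : R) : R :=
  if (t < T)%N then cB * (D - X) else cB * (D - X) + cP * X - bP * X.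

Definition term (t : nat) (d : R) : R :=
  Num.max (fI t (Xc t) (Dh t - d)) (fB t (Xc t) (Dh t + d)).

Definition obj (delta : nat -> R) : R := \sum_(1 <= t < T.+1) term t (delta t).

Definition feasible (delta : nat -> R) : Prop :=
  \sum_(1 <= t < T.+1) delta t <= Gamma%:R /\
  (forall t, (1 <= t <= T)%N -> 0 <= delta t <= (Delta t)%:R).

Definition optimal_value (C : R) : Prop :=
  (exists delta, feasible delta /\ obj delta = C) /\
  (forall delta, feasible delta -> obj delta <= C).

(* nodes: mid t k stands for t^k (layer V_t); source s = 0^0 = mid 0 0;
   snk is the sink t. *)
Inductive node := mid of nat & nat | snk.

Definition src : node := mid 0 0.

(* arc cost; None means there is no arc. Since the arc ((t-1)^d, t^(d+dt))
   is determined by its endpoints, arcs are given by pairs of nodes. *)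
Definition arc (u v : node) : option R :=
  match u, v with
  | mid s d, mid t d' =>
      if [&& s.+1 == t, (1 <= t <= T)%N, (s == 0%N) ==> (d == 0%N),
             (d <= d')%N, (d' <= Gamma)%N & (d' - d <= Delta t)%N]
      then Some (term t (d' - d)%:R) else None
  | mid s d, snk =>
      if [&& s == T, (d <= Gamma)%N & (s == 0%N) ==> (d == 0%N)]
      then Some 0 else None
  | snk, _ => None
  end.

Fixpoint plen (u : node) (p : seq node) : option R :=
  match p with
  | [::] => Some 0
  | v :: p' =>
      match arc u v, plen v p' with
      | Some c, Some l => Some (c + l)
      | _, _ => None
      end
  end.

(* p (the nodes after s) is an s-t path in G of length L *)
Definition st_path (p : seq node) (L : R) : Prop :=
  plen src p = Some L /\ last src p = snk.

Definition longest_path_length (C : R) : Prop :=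
  (exists p, st_path p C) /\ (forall p L, st_path p L -> L <= C).

End Model.

(* Each arc cost [term t] is a maximum of two affine functions of the deviation,
   hence convex, so the objective is a separable convex function.  Its maximum
   over the polytope {sum delta <= Gamma, 0 <= delta <= Delta} is attained at an
   integral point: a feasible point with a fractional coordinate can be moved
   along e_i - e_j (two fractional coordinates i, j) or e_i (only one) until a
   coordinate becomes integral, in either direction, and by convexity one of the
   two endpoints is no worse.  Integral feasible deviations are exactly the s-t
   paths of G, the objective being the path length, so the optimal value and the
   longest path length coincide. *)

From mathcomp Require Import all_boot all_order all_algebra.
From mathcomp Require Import ring lra zify.
Set Implicit Arguments. Unset Strict Implicit. Unset Printing Implicit Defensive.
Import Order.TTheory GRing.Theory Num.Theory.
Local Open Scope ring_scope.

Section Convexity.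
Variable R : realFieldType.

Definition convex_fun (f : R -> R) :=
  forall u w l : R, 0 <= l <= 1 -> f ((1 - l) * u + l * w) <= (1 - l) * f u + l * f w.

Lemma convex_max (f g : R -> R) :
  convex_fun f -> convex_fun g -> convex_fun (fun d => Num.max (f d) (g d)).
Proof.
move=> cf cg u w l l01; have /andP [l0 l1] := l01.
rewrite ge_max; apply/andP; split;
  [apply: le_trans (cf u w l l01) _ | apply: le_trans (cg u w l l01) _];
  by apply: lerD; apply: ler_wpM2l; rewrite ?subr_ge0 // le_max lexx ?orbT.
Qed.

Lemma convex_le_max (f : R -> R) u v w :
  convex_fun f -> u <= v <= w -> f v <= Num.max (f u) (f w).
Proof.
move=> cf /andP [uv vw]; have [wu | uw] := eqVneq w u.
  have -> : v = u by apply/le_anti; rewrite uv -wu vw.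
  by rewrite le_max lexx.
have wu0 : 0 < w - u by rewrite subr_gt0 lt_neqAle eq_sym uw (le_trans uv vw).
pose l := (v - u) / (w - u).
have l0 : 0 <= l by rewrite /l divr_ge0 ?subr_ge0 // (le_trans uv vw).
have l1 : l <= 1 by rewrite /l ler_pdivrMr // mul1r lerD2r.
have -> : v = (1 - l) * u + l * w by rewrite /l; field; rewrite gt_eqF.
apply: le_trans (cf u w l _) _; first by rewrite l0 l1.
set M := Num.max _ _; have -> : M = (1 - l) * M + l * M by ring.
by apply: lerD; apply: ler_wpM2l; rewrite ?subr_ge0 // le_max lexx ?orbT.
Qed.

End Convexity.

Lemma convex_term (R : realFieldType) T cP cI cB bP (x Dh : nat -> R) t :
  convex_fun (term T cP cI cB bP x Dh t).
Proof.
by apply: convex_max => u w l _; rewrite /fI /fB; case: ifP => _;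
  rewrite le_eqVlt; apply/orP; left; apply/eqP; ring.
Qed.

Lemma count_subpred_ltn (A : eqType) (a1 a2 : pred A) (s : seq A) x :
  subpred a1 a2 -> x \in s -> a2 x -> ~~ a1 x -> (count a1 s < count a2 s)%N.
Proof.
move=> sub12; elim: s => //= y s IH; rewrite in_cons => /orP [/eqP <- | xs] a2x a1x.
  by rewrite a2x (negbTE a1x) add1n ltnS sub_count.
have := IH xs a2x a1x; case: (boolP (a1 y)) => [/sub12 -> | _] /=; lia.
Qed.

Section NatFloor.
Variable R : realFieldType.

(* [R] need not be archimedean, so the floor of [d] in [0, N] is found by
   counting the integers [1 <= k <= N] below [d]. *)
Definition nat_floor (N : nat) (d : R) : nat :=
  (\sum_(1 <= k < N.+1) ((k%:R : R) <= d)%R)%N.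

Lemma nat_floor_spec N d : 0 <= d -> d <= N%:R ->
  [/\ (nat_floor N d <= N)%N, (nat_floor N d)%:R <= d & d < (nat_floor N d).+1%:R].
Proof.
elim: N d => [|N IH] d d0 dN.
  rewrite /nat_floor big_geq //; have -> : d = 0 by apply/le_anti; rewrite d0 dN.
  by rewrite ltr01 lexx.
rewrite /nat_floor big_nat_recr //= -/(nat_floor N d).
have [dleN | Nltd] := lerP d N%:R.
  have [floorN floor_le lt_floor] := IH d d0 dleN.
  have -> : (N.+1%:R <= d) = false by apply/negbTE; rewrite -ltNge (le_lt_trans dleN) ?ltr_nat.
  by rewrite addn0 (leq_trans floorN).
have -> : nat_floor N d = N.
  rewrite /nat_floor (eq_big_nat _ _ (F2 := fun _ => 1%N)) => [|k /andP [_ kN]].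
    by rewrite sum_nat_const_nat subn1 muln1.
  by rewrite (le_trans _ (ltW Nltd)) // ler_nat -ltnS.
have [Nled | dltN] /= := lerP N.+1%:R d.
  have -> : d = N.+1%:R by apply/le_anti; rewrite dN Nled.
  by rewrite addn1 lexx ltr_nat.
by rewrite addn0 leqnSn (ltW Nltd).
Qed.

Lemma nat_floorK N m : (m <= N)%N -> nat_floor N (m%:R : R) = m.
Proof.
move=> mN; have mN' : (m%:R : R) <= N%:R by rewrite ler_nat.
have [_ + +] := nat_floor_spec (ler0n R m) mN'.
by rewrite ler_nat ltr_nat ltnS => ge_m le_m; apply/eqP; rewrite eqn_leq ge_m le_m.
Qed.

End NatFloor.

Section Feasibility.
Variables (R : realFieldType) (T : nat) (Delta : nat -> nat) (Gamma : nat).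

Lemma feasible_eq (d d' : nat -> R) :
  (forall t, (1 <= t <= T)%N -> d t = d' t) ->
  feasible T Delta Gamma d -> feasible T Delta Gamma d'.
Proof.
move=> dd' [sum_le box]; split=> [|t tT]; last by rewrite -dd' ?box.
by rewrite -(eq_big_nat _ _ (F1 := d)) // => t; rewrite ltnS => /dd'.
Qed.

Lemma feasible_natP (n : nat -> nat) :
  feasible T Delta Gamma (fun t => (n t)%:R : R) <->
  (\sum_(1 <= t < T.+1) n t <= Gamma)%N /\ (forall t, (1 <= t <= T)%N -> (n t <= Delta t)%N).
Proof.
rewrite /feasible -natr_sum ler_nat.
by split=> -[-> box]; split=> // t /box; rewrite ?ler0n ?ler_nat.
Qed.

End Feasibility.

Section Rounding.
Variables (R : realFieldType) (T : nat) (Delta : nat -> nat) (Gamma : nat).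
Variable g : nat -> R -> R.
Hypothesis g_convex : forall t, convex_fun (g t).

Local Notation feasible := (@feasible R T Delta Gamma).

Definition objective (d : nat -> R) : R := \sum_(1 <= t < T.+1) g t (d t).

Definition fractional (d : nat -> R) (t : nat) : bool :=
  d t != (nat_floor (Delta t) (d t))%:R.

Definition nfractional (d : nat -> R) : nat := count (fractional d) (index_iota 1 T.+1).

Definition shift (d c : nat -> R) (s : R) (t : nat) : R := d t + s * c t.

Definition rounding_step (d : nat -> R) : Prop := exists d',
  [/\ feasible d', (nfractional d' < nfractional d)%N & objective d <= objective d'].

Lemma objective_eq (d d' : nat -> R) :
  (forall t, (1 <= t <= T)%N -> d t = d' t) -> objective d = objective d'.
Proof. by move=> dd'; apply: eq_big_nat => t; rewrite ltnS => /dd' ->. Qed.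

Lemma convex_objective_shift (d c : nat -> R) :
  convex_fun (fun s => objective (shift d c s)).
Proof.
move=> u w l l01; rewrite /objective !mulr_sumr -big_split /=; apply: ler_sum => t _.
have -> : shift d c ((1 - l) * u + l * w) t = (1 - l) * shift d c u t + l * shift d c w t.
  by rewrite /shift; ring.
exact: g_convex.
Qed.

Lemma sum_shift (d c : nat -> R) s :
  \sum_(1 <= t < T.+1) shift d c s t =
  \sum_(1 <= t < T.+1) d t + s * \sum_(1 <= t < T.+1) c t.
Proof. by rewrite big_split /= mulr_sumr. Qed.

Lemma sum_indicator i : (1 <= i <= T)%N -> \sum_(1 <= t < T.+1) ((t == i)%:R : R) = 1.
Proof.
move=> iT; have i_in : i \in index_iota 1 T.+1 by rewrite mem_index_iota ltnS.
by rewrite (bigD1_seq i) ?iota_uniq //= eqxx big1 ?addr0 // => t /negbTE ->.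
Qed.

Lemma fractional_bounds (d : nat -> R) i : feasible d -> (1 <= i <= T)%N -> fractional d i ->
  let a := nat_floor (Delta i) (d i) in [/\ a%:R < d i, d i < a.+1%:R & (a < Delta i)%N].
Proof.
move=> [_ box] iT frac_i a; have /andP [d0 dD] := box i iT.
have [aD a_le lt_a] := nat_floor_spec d0 dD.
have a_lt : a%:R < d i by rewrite lt_neqAle a_le andbT eq_sym.
split=> //; rewrite ltn_neqAle aD andbT; apply: contraTneq a_lt => ->.
by rewrite -leNgt.
Qed.

Lemma nfractional_ltn (d d' : nat -> R) k m :
  (forall t, ~~ fractional d t -> d' t = d t) -> (1 <= k <= T)%N -> fractional d k ->
  (m <= Delta k)%N -> d' k = m%:R -> (nfractional d' < nfractional d)%N.
Proof.
move=> fixed kT frac_k mD d'k; apply: (count_subpred_ltn (x := k)) => //.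
- move=> t frac'_t; apply: contraTT frac'_t => /[dup] /fixed.
  by rewrite /fractional => ->.
- by rewrite mem_index_iota ltnS.
- by rewrite /fractional d'k nat_floorK // eqxx.
Qed.

Lemma improve_on_segment (d c : nat -> R) p q : 0 <= p -> 0 <= q ->
  (forall s, s = - p \/ s = q ->
     feasible (shift d c s) /\ (nfractional (shift d c s) < nfractional d)%N) ->
  rounding_step d.
Proof.
move=> p0 q0 ends.
have obj_d : objective d = objective (shift d c 0).
  by apply: objective_eq => t _; rewrite /shift mul0r addr0.
have := convex_le_max (convex_objective_shift d c) (u := - p) (v := 0) (w := q).
rewrite oppr_le0 p0 q0 -obj_d le_max => /(_ isT) /orP [] le_end.
- by have [? ?] := ends _ (or_introl erefl); exists (shift d c (- p)).
- by have [? ?] := ends _ (or_intror erefl); exists (shift d c q).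
Qed.

Lemma min_cases (u v : R) : Num.min u v = u \/ Num.min u v = v.
Proof. by rewrite minEle; case: ifP; [left | right]. Qed.

Lemma pair_rounding_step (d : nat -> R) i j : feasible d ->
  (1 <= i <= T)%N -> (1 <= j <= T)%N -> i != j -> fractional d i -> fractional d j ->
  rounding_step d.
Proof.
move=> fd iT jT ij frac_i frac_j.
have [ai_lt lt_ai aD] := fractional_bounds fd iT frac_i.
have [bj_lt lt_bj bD] := fractional_bounds fd jT frac_j.
set a := nat_floor _ (d i) in ai_lt lt_ai aD.
set b := nat_floor _ (d j) in bj_lt lt_bj bD.
pose c t : R := (t == i)%:R - (t == j)%:R.
have shift_i s : shift d c s i = d i + s.
  by rewrite /shift /c eqxx (negbTE ij) subr0 mulr1.
have shift_j s : shift d c s j = d j - s.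
  by rewrite /shift /c eqxx eq_sym (negbTE ij) sub0r mulrN1.
have fixed s t : ~~ fractional d t -> shift d c s t = d t.
  have [-> | ti] := eqVneq t i; first by rewrite frac_i.
  have [-> | tj] := eqVneq t j; first by rewrite frac_j.
  by rewrite /shift /c (negbTE ti) (negbTE tj) subrr mulr0 addr0.
(* [p] and [q] are the step lengths, down and up along [e_i - e_j], at which
   [d i] or [d j] first reaches an integer. *)
pose p := Num.min (d i - a%:R) (b.+1%:R - d j).
pose q := Num.min (a.+1%:R - d i) (d j - b%:R).
have [p_i p_j] : p <= d i - a%:R /\ p <= b.+1%:R - d j by split; rewrite ge_min lexx ?orbT.
have [q_i q_j] : q <= a.+1%:R - d i /\ q <= d j - b%:R by split; rewrite ge_min lexx ?orbT.
have [a0 b0] : 0 <= a%:R :> R /\ 0 <= b%:R :> R by rewrite !ler0n.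
have [aD' bD'] : a.+1%:R <= (Delta i)%:R :> R /\ b.+1%:R <= (Delta j)%:R :> R.
  by rewrite !ler_nat.
have p0 : 0 <= p by rewrite le_min !subr_ge0 !ltW.
have q0 : 0 <= q by rewrite le_min !subr_ge0 !ltW.
apply: (improve_on_segment (c := c) p0 q0) => s s_end.
have [ps sq] : - p <= s /\ s <= q by case: s_end => ->; split; lra.
split.
  split=> [|t tT]; first by rewrite sum_shift sumrB !sum_indicator // subrr mulr0 addr0; case: fd.
  have [-> | ti] := eqVneq t i; first by rewrite shift_i; apply/andP; split; lra.
  have [-> | tj] := eqVneq t j; first by rewrite shift_j; apply/andP; split; lra.
  by rewrite /shift /c (negbTE ti) (negbTE tj) subrr mulr0 addr0; case: fd => _ ->.
case: s_end => ->.
- have [e | e] := min_cases (d i - a%:R) (b.+1%:R - d j); rewrite -/p in e.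
    by apply: (nfractional_ltn (fixed _) iT frac_i (ltnW aD)); rewrite shift_i e; ring.
  by apply: (nfractional_ltn (fixed _) jT frac_j bD); rewrite shift_j e; ring.
- have [e | e] := min_cases (a.+1%:R - d i) (d j - b%:R); rewrite -/q in e.
    by apply: (nfractional_ltn (fixed _) iT frac_i aD); rewrite shift_i e; ring.
  by apply: (nfractional_ltn (fixed _) jT frac_j (ltnW bD)); rewrite shift_j e; ring.
Qed.

Lemma single_rounding_step (d : nat -> R) i : feasible d ->
  (1 <= i <= T)%N -> fractional d i ->
  (forall t, (1 <= t <= T)%N -> t != i -> ~~ fractional d t) -> rounding_step d.
Proof.
move=> fd iT frac_i others; have [sum_le box] := fd.
have [a_lt lt_a aD] := fractional_bounds fd iT frac_i.
set a := nat_floor _ (d i) in a_lt lt_a aD.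
have a0 : 0 <= a%:R :> R by rewrite ler0n.
have aD' : a.+1%:R <= (Delta i)%:R :> R by rewrite ler_nat.
pose c t : R := (t == i)%:R.
have shift_i s : shift d c s i = d i + s by rewrite /shift /c eqxx mulr1.
have fixed s t : ~~ fractional d t -> shift d c s t = d t.
  have [-> | ti] := eqVneq t i; first by rewrite frac_i.
  by rewrite /shift /c (negbTE ti) mulr0 addr0.
have p0 : 0 <= d i - a%:R by rewrite subr_ge0 ltW.
have q0 : 0 <= a.+1%:R - d i by rewrite subr_ge0 ltW.
apply: (improve_on_segment (c := c) p0 q0) => s [] ->.
- split; last first.
    by apply: (nfractional_ltn (fixed _) iT frac_i (ltnW aD)); rewrite shift_i; ring.
  split=> [|t tT]; first by rewrite sum_shift sum_indicator // mulr1; lra.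
  have [-> | ti] := eqVneq t i; first by rewrite shift_i; apply/andP; split; lra.
  by rewrite fixed ?box ?others.
- split; last by apply: (nfractional_ltn (fixed _) iT frac_i aD); rewrite shift_i; ring.
  (* Rounding [d i] up makes every coordinate integral; as [Gamma] is an integer
     and the total grows by less than 1, the budget still holds. *)
  pose n t := if t == i then a.+1 else nat_floor (Delta t) (d t).
  have shift_n t : (1 <= t <= T)%N -> (n t)%:R = shift d c (a.+1%:R - d i) t.
    move=> tT; rewrite /n; have [-> | ti] := eqVneq t i; first by rewrite shift_i; ring.
    by rewrite fixed ?others //; apply/esym/eqP; rewrite -[_ == _]negbK others.
  apply: (feasible_eq shift_n); apply/feasible_natP; split=> [|t tT].
    rewrite -ltnS -(ltr_nat R) natr_sum (eq_big_nat _ _ (n := T.+1) shift_n) sum_shift.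
    by rewrite sum_indicator // mulr1 -natr1; lra.
  rewrite /n; case: eqP => [-> // | _]; have /andP [d0 dD] := box t tT.
  by case: (nat_floor_spec d0 dD).
Qed.

Lemma fractional_rounding_step (d : nat -> R) k :
  feasible d -> (1 <= k <= T)%N -> fractional d k -> rounding_step d.
Proof.
move=> fd kT frac_k.
have [/hasP [j j_in /andP [jk frac_j]] | /hasPn others] :=
  boolP (has (fun j => (j != k) && fractional d j) (index_iota 1 T.+1)).
  rewrite mem_index_iota ltnS in j_in.
  by apply: (pair_rounding_step fd kT j_in _ frac_k frac_j); rewrite eq_sym.
apply: single_rounding_step fd kT frac_k _ => t tT tk.
by have := others t; rewrite mem_index_iota ltnS tT tk => /(_ isT).
Qed.

Lemma integral_rounding (d : nat -> R) : feasible d -> exists n : nat -> nat,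
  feasible (fun t => (n t)%:R) /\ objective d <= objective (fun t => (n t)%:R).
Proof.
have [k] := ubnP (nfractional d); elim: k d => // k IH d; rewrite ltnS => dk fd.
have [/hasP [t t_in frac_t] | /hasPn integral] :=
  boolP (has (fractional d) (index_iota 1 T.+1)).
  rewrite mem_index_iota ltnS in t_in.
  have [d' [fd' d'd le_dd']] := fractional_rounding_step fd t_in frac_t.
  have [n [fn le_d'n]] := IH d' (leq_trans d'd dk) fd'.
  by exists n; split=> //; apply: le_trans le_dd' le_d'n.
have d_floor t : (1 <= t <= T)%N -> d t = (nat_floor (Delta t) (d t))%:R.
  move=> tT; apply/eqP; rewrite -[_ == _]negbK.
  by apply: integral; rewrite mem_index_iota ltnS.
exists (fun t => nat_floor (Delta t) (d t)); split; first exact: feasible_eq d_floor fd.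
by rewrite (objective_eq d_floor).
Qed.

End Rounding.

Section Paths.
Variables (R : realFieldType) (T : nat) (cP cI cB bP : R) (x Dh : nat -> R).
Variables (Delta : nat -> nat) (Gamma : nat).

Local Notation term := (term T cP cI cB bP x Dh).
Local Notation plen := (plen T cP cI cB bP x Dh Delta Gamma).
Local Notation st_path := (st_path T cP cI cB bP x Dh Delta Gamma).
Local Notation feasible := (@feasible R T Delta Gamma).
Local Notation obj := (obj T cP cI cB bP x Dh).

Lemma path_to_sink_deviations s d p L :
  plen (mid s d) p = Some L -> last (mid s d) p = snk ->
  exists n : nat -> nat, [/\ (d + \sum_(s.+1 <= t < T.+1) n t <= Gamma)%N,
    forall t, (s < t <= T)%N -> (n t <= Delta t)%N &
    L = \sum_(s.+1 <= t < T.+1) term t (n t)%:R].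
Proof.
elim: p s d L => [|v p IH] s d L //=; case: v => [t d' | ] /=; case: ifP => // arc_ok.
  case E: plen => [l|] // [<-] /(IH _ _ _ E) [n [sum_le box ->]].
  move: arc_ok => /andP [/eqP st /and5P [sT _ dd' _ d'D]]; subst t.
  exists (fun k => if k == s.+1 then (d' - d)%N else n k).
  have later k : (s.+2 <= k)%N -> (if k == s.+1 then (d' - d)%N else n k) = n k.
    by move=> sk; rewrite ifN // neq_ltn sk orbT.
  have sum_later : (\sum_(s.+2 <= k < T.+1) (if k == s.+1 then d' - d else n k) =
                    \sum_(s.+2 <= k < T.+1) n k)%N.
    by apply: eq_big_nat => k /andP [sk _]; rewrite later.
  have term_later : \sum_(s.+2 <= k < T.+1) term k (if k == s.+1 then d' - d else n k)%N%:R =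
                    \sum_(s.+2 <= k < T.+1) term k (n k)%:R.
    by apply: eq_big_nat => k /andP [sk _]; rewrite later.
  have sT' : (s.+1 < T.+1)%N by rewrite ltnS; case/andP: sT.
  rewrite !(big_ltn sT') eqxx sum_later term_later; split=> // [|k /andP [sk kT]].
    lia.
  by case: eqP => [-> // | ?]; apply: box; lia.
case: p {IH} => // -[<-] _; move: arc_ok => /and3P [/eqP -> dG _].
by exists (fun _ => 0%N); rewrite !big_geq // addn0 addr0; split=> // t; lia.
Qed.

Lemma deviations_path_to_sink (n : nat -> nat) k s d : (s + k = T)%N ->
  (d + \sum_(s.+1 <= t < T.+1) n t <= Gamma)%N -> (s == 0)%N ==> (d == 0)%N ->
  (forall t, (s < t <= T)%N -> (n t <= Delta t)%N) ->
  exists p, plen (mid s d) p = Some (\sum_(s.+1 <= t < T.+1) term t (n t)%:R) /\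
            last (mid s d) p = snk.
Proof.
elim: k s d => [|k IH] s d.
  rewrite addn0 => <- sum_le first_layer _; exists [:: snk].
  by rewrite !big_geq // addn0 in sum_le *; rewrite /= eqxx sum_le first_layer /= addr0.
move=> sk sum_le first_layer box; have sT : (s < T)%N by lia.
rewrite big_ltn ?ltnS // in sum_le.
have sk' : (s.+1 + k = T)%N by lia.
have sum_le' : (d + n s.+1 + \sum_(s.+2 <= t < T.+1) n t <= Gamma)%N by lia.
have box' t : (s.+1 < t <= T)%N -> (n t <= Delta t)%N by move=> t_s; apply: box; lia.
have [p [p_len p_last]] := IH s.+1 (d + n s.+1)%N sk' sum_le' isT box'.
exists (mid s.+1 (d + n s.+1) :: p); split => //=.
rewrite ifT; last by have := box s.+1; lia.
by rewrite p_len addKn big_ltn ?ltnS.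
Qed.

Lemma st_path_integral p L : st_path p L ->
  exists n : nat -> nat, feasible (fun t => (n t)%:R) /\ L = obj (fun t => (n t)%:R).
Proof.
move=> [p_len p_last]; have [n [sum_le box ->]] := path_to_sink_deviations p_len p_last.
by exists n; split=> //; apply/feasible_natP; split=> [|t tT]; [lia | apply: box].
Qed.

Lemma integral_st_path (n : nat -> nat) : feasible (fun t => (n t)%:R) ->
  exists p, st_path p (obj (fun t => (n t)%:R)).
Proof.
move=> /feasible_natP [sum_le box].
have [p path_p] := @deviations_path_to_sink n T 0 0 erefl sum_le isT box.
by exists p.
Qed.

End Paths.

Theorem proposition2 (R : realFieldType) (T : nat) (hT : (1 <= T)%N)
  (cP cI cB bP : R) (cstr : seq ((nat -> R) * R)) (x : nat -> R)
  (Dh : nat -> R) (Delta : nat -> nat) (Gamma : nat)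
  (hx : in_Xset T cstr x)
  (hD0 : forall t, (1 <= t <= T)%N -> 0 <= Dh t)
  (hDmono : forall s t, (1 <= s)%N -> (s <= t)%N -> (t <= T)%N -> Dh s <= Dh t)
  (hDelta : forall t, (1 <= t <= T)%N -> (Delta t)%:R <= Dh t) :
  forall Cstar : R,
    optimal_value T cP cI cB bP x Dh Delta Gamma Cstar <->
    longest_path_length T cP cI cB bP x Dh Delta Gamma Cstar.
Proof.
move=> C.
have round := integral_rounding (T := T) (Delta := Delta) (Gamma := Gamma)
  (convex_term T cP cI cB bP x Dh).
split=> [[[d [fd <-]] d_opt] | [[p /st_path_integral [n [fn ->]]] p_longest]].
- have [n [fn le_dn]] := round d fd.
  have [p path_p] := integral_st_path cP cI cB bP x Dh fn.
  have obj_dn : obj T cP cI cB bP x Dh d = obj T cP cI cB bP x Dh (fun t => (n t)%:R).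
    by apply/le_anti; rewrite le_dn d_opt.
  split; first by exists p; rewrite obj_dn.
  by move=> q L /st_path_integral [n' [fn' ->]]; apply: d_opt.
- split=> [|d fd]; first by exists (fun t => (n t)%:R).
  have [n' [fn' le_dn']] := round d fd.
  have [p' path_p'] := integral_st_path cP cI cB bP x Dh fn'.
  exact: le_trans le_dn' (p_longest _ _ path_p').
Qed.
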